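(* Let $\mathcal A\in\mathbb Q^{n_1\times m\times n_3}$ and $\mathcal B\in\mathbb Q^{m\times n_2\times n_3}$. Then: (1) if $n_1=m$, then $\rho_{QT}(\mathcal A)\le \|\mathcal A\|_s$; (2) $\|\mathcal A*_Q\mathcal B\|_s\le \|\mathcal A\|_s\|\mathcal B\|_s$; (3) $(\mathcal A*_Q\mathcal B)^*=\mathcal B^**_Q\mathcal A^*$; (4) $(\mathcal A*_Q\mathcal B)*_Q\mathcal C=\mathcal A*_Q(\mathcal B*_Q\mathcal C)$ for every $\mathcal C\in\mathbb Q^{n_2\times n\times n_3}$; (5) $\mathcal A*_Q(\mathcal B+\mathcal C)=\mathcal A*_Q\mathcal B+\mathcal A*_Q\mathcal C$ for every $\mathcal C\in\mathbb Q^{m\times n_2\times n_3}$.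
   Context: $\mathbb Q$ denotes the real quaternions $a=a_0+a_1\mathbf i+a_2\mathbf j+a_3\mathbf k$ ($a_t\in\mathbb R$, $\mathbf i^2=\mathbf j^2=\mathbf k^2=-1$, $\mathbf{ij}=\mathbf k=-\mathbf{ji}$, $\mathbf{jk}=\mathbf i=-\mathbf{kj}$, $\mathbf{ki}=\mathbf j=-\mathbf{ik}$), with conjugate $a^*=a_0-a_1\mathbf i-a_2\mathbf j-a_3\mathbf k$ and $|a|=\sqrt{a^*a}$; $\mathbb C$ is identified with $\{a_0+a_1\mathbf i\}$. Every quaternion array $A=A_0+A_1\mathbf i+A_2\mathbf j+A_3\mathbf k$ (real $A_t$) is written uniquely as $A=A_{\mathbf d}+\mathbf jA_{\mathbf c}$ with $A_{\mathbf d}=A_0+A_1\mathbf i$, $A_{\mathbf c}=A_2-A_3\mathbf i$ complex. For a tensor $\mathcal A\in\mathbb Q^{n_1\times n_2\times n_3}$, $\mathcal A^{(s)}$ is its $s$-th frontal slice $\mathcal A(:,:,s)$. For a complex tensor $\mathcal C\in\mathbb C^{n_1\times n_2\times n_3}$, $\mathtt{bcirc}(\mathcal C)\in\mathbb C^{n_1n_3\times n_2n_3}$ is the block circulant matrix whose $(p,q)$ block ($1\le p,q\le n_3$) is $\mathcal C^{(((p-q)\bmod n_3)+1)}$. $P_{n_3}$ is the $n_3\times n_3$ permutation matrix whose first row is $e_1^T$ and whose $r$-th row, $r\ge2$, is $e_{n_3+2-r}^T$. The $z$-block circulant matrix of $\mathcal A=\mathcal A_{\mathbf d}+\mathbf j\mathcal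 A_{\mathbf c}$ is $\mathtt{bcirc_z}(\mathcal A)=\mathtt{bcirc}(\mathcal A_{\mathbf d})+\mathbf j\,\mathtt{bcirc}(\mathcal A_{\mathbf c})(P_{n_3}\otimes I_{n_2})\in\mathbb Q^{n_1n_3\times n_2n_3}$. $\mathtt{unfold}(\mathcal B)=[\mathcal B^{(1)};\dots;\mathcal B^{(n_3)}]$ (block column) and $\mathtt{fold}$ is its inverse. The QT-product of $\mathcal A\in\mathbb Q^{n_1\times r\times n_3}$ and $\mathcal B\in\mathbb Q^{r\times n_2\times n_3}$ is $\mathcal A*_Q\mathcal B=\mathtt{fold}(\mathtt{bcirc_z}(\mathcal A)\,\mathtt{unfold}(\mathcal B))\in\mathbb Q^{n_1\times n_2\times n_3}$. For a complex tensor $\mathcal C\in\mathbb C^{n_1\times n_2\times n_3}$, $\mathcal C^*\in\mathbb C^{n_2\times n_1\times n_3}$ has frontal slices $(\mathcal C^{(1)})^*$ and $(\mathcal C^* )^{(s)}=(\mathcal C^{(n_3+2-s)})^*$ for $s\ge2$. The conjugate transpose of $\mathcal A=\mathcal A_{\mathbf d}+\mathbf j\mathcal A_{\mathbf c}\in\mathbb Q^{n_1\times n_2\times n_3}$ is the tensor $\mathcal A^*\in\mathbb Q^{n_2\times n_1\times n_3}$ with $\mathtt{unfold}(\mathcal A^* )=\mathtt{unfold}(\mathcal A_{\mathbf d}^* )-(P_{n_3}\otimes I_{n_2})\mathtt{unfold}(\mathcal A_{\mathbf c}^* )\mathbf j$. For a quaternion matrix $M$, $\|M\|_2=\max_{\|x\|=1}\|Mx\|$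 (Euclidean norm $\|x\|=(\sum|x_i|^2)^{1/2}$ on quaternion vectors); a right eigenvalue of a square $M$ is $\lambda\in\mathbb Q$ with $Mx=x\lambda$ for some $x\ne0$, and $\rho(M)$ is the maximum of $|\lambda|$ over right eigenvalues. QT-spectral norm: $\|\mathcal A\|_s=\|\mathtt{bcirc_z}(\mathcal A)\|_2$; QT-spectral radius (square frontal slices): $\rho_{QT}(\mathcal A)=\rho(\mathtt{bcirc_z}(\mathcal A))$. *)

From HB Require Import structures.
From mathcomp Require Import all_boot all_order all_algebra.
From mathcomp Require Import ring zify.
From mathcomp Require Import classical_sets reals.
Set Implicit Arguments. Unset Strict Implicit. Unset Printing Implicit Defensive.
Import Order.TTheory GRing.Theory Num.Theory.
Local Open Scope ring_scope.

Section Quaternion.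
Variable R : realType.

Record quat := Quat { q0 : R; q1 : R; q2 : R; q3 : R }.

Definition quat_to (a : quat) := (q0 a, q1 a, q2 a, q3 a).
Definition quat_of (x : R * R * R * R) := let: (a, b, c, d) := x in Quat a b c d.
Lemma quat_toK : cancel quat_to quat_of. Proof. by case. Qed.
HB.instance Definition _ := Choice.copy quat (can_type quat_toK).

Definition qzero := Quat 0 0 0 0.
Definition qadd a b := Quat (q0 a + q0 b) (q1 a + q1 b) (q2 a + q2 b) (q3 a + q3 b).
Definition qopp a := Quat (- q0 a) (- q1 a) (- q2 a) (- q3 a).

Lemma qaddA : associative qadd.
Proof. by move=> [? ? ? ?] [? ? ? ?] [? ? ? ?]; rewrite /qadd /=; congr Quat; ring. Qed.
Lemma qaddC : commutative qadd.
Proof. by move=> [? ? ? ?] [? ? ? ?]; rewrite /qadd /=; congr Quat; ring. Qed.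
Lemma qadd0 : left_id qzero qadd.
Proof. by move=> [? ? ? ?]; rewrite /qadd /=; congr Quat; ring. Qed.
Lemma qaddN : left_inverse qzero qopp qadd.
Proof. by move=> [? ? ? ?]; rewrite /qadd /=; congr Quat; ring. Qed.
HB.instance Definition _ := GRing.isZmodule.Build quat qaddA qaddC qadd0 qaddN.

(* Hamilton product: i^2 = j^2 = k^2 = -1, ij = k = -ji, jk = i = -kj, ki = j = -ik *)
Definition qone := Quat 1 0 0 0.
Definition qmul a b := Quat
  (q0 a * q0 b - q1 a * q1 b - q2 a * q2 b - q3 a * q3 b)
  (q0 a * q1 b + q1 a * q0 b + q2 a * q3 b - q3 a * q2 b)
  (q0 a * q2 b - q1 a * q3 b + q2 a * q0 b + q3 a * q1 b)
  (q0 a * q3 b + q1 a * q2 b - q2 a * q1 b + q3 a * q0 b).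

Lemma qmulA : associative qmul.
Proof. by move=> [? ? ? ?] [? ? ? ?] [? ? ? ?]; rewrite /qmul /=; congr Quat; ring. Qed.
Lemma qmul1 : left_id qone qmul.
Proof. by move=> [? ? ? ?]; rewrite /qmul /=; congr Quat; ring. Qed.
Lemma qmulr1 : right_id qone qmul.
Proof. by move=> [? ? ? ?]; rewrite /qmul /=; congr Quat; ring. Qed.
Lemma qmulDl : left_distributive qmul qadd.
Proof. by move=> [? ? ? ?] [? ? ? ?] [? ? ? ?]; rewrite /qmul /qadd /=; congr Quat; ring. Qed.
Lemma qmulDr : right_distributive qmul qadd.
Proof. by move=> [? ? ? ?] [? ? ? ?] [? ? ? ?]; rewrite /qmul /qadd /=; congr Quat; ring. Qed.
Lemma qone_neq0 : qone != 0.
Proof. by apply/eqP => -[] /eqP; rewrite oner_eq0. Qed.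
HB.instance Definition _ :=
  GRing.Zmodule_isNzRing.Build quat qmulA qmul1 qmulr1 qmulDl qmulDr qone_neq0.

Definition qi : quat := Quat 0 1 0 0.
Definition qj : quat := Quat 0 0 1 0.
Definition qk : quat := Quat 0 0 0 1.

(* conjugate a^* (conj) and modulus |a| = sqrt(a^* a) (a^* a is a real quaternion) *)
Definition qconj (a : quat) := Quat (q0 a) (- q1 a) (- q2 a) (- q3 a).
Definition qabs (a : quat) : R := Num.sqrt (q0 (qconj a * a)).

(* complex numbers C are identified with {a0 + a1 i}; the unique splitting
   a = a_d + j a_c with a_d = a0 + a1 i and a_c = a2 - a3 i (both complex) *)
Definition qdpart (a : quat) : quat := Quat (q0 a) (q1 a) 0 0.
Definition qcpart (a : quat) : quat := Quat (q2 a) (- q3 a) 0 0.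

End Quaternion.

Lemma blk_proof n p (i : 'I_(n * p)) : (i %/ n < p)%N.
Proof.
case: i => k /= hk; case: n hk => [|n] hk; first by rewrite mul0n in hk.
by rewrite ltn_divLR // mulnC.
Qed.
Definition blk n p (i : 'I_(n * p)) : 'I_p := Ordinal (blk_proof i).

Lemma inblk_proof n p (i : 'I_(n * p)) : (i %% n < n)%N.
Proof.
case: i => k /= hk; case: n hk => [|n] hk; first by rewrite mul0n in hk.
by rewrite ltn_pmod.
Qed.
Definition inblk n p (i : 'I_(n * p)) : 'I_n := Ordinal (inblk_proof i).

Lemma ordmod_proof n (r : 'I_n) k : (k %% n < n)%N.
Proof. by rewrite ltn_pmod // (leq_ltn_trans (leq0n r) (ltn_ord r)). Qed.
Definition ordsub n (p q : 'I_n) : 'I_n := Ordinal (ordmod_proof p (p + n - q)%N).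
Definition ordneg n (r : 'I_n) : 'I_n := Ordinal (ordmod_proof r (n - r)%N).

Lemma bidx_proof n p (s : 'I_p) (i : 'I_n) : (s * n + i < n * p)%N.
Proof. have := ltn_ord s; have := ltn_ord i; nia. Qed.
Definition bidx n p (s : 'I_p) (i : 'I_n) : 'I_(n * p) := Ordinal (bidx_proof s i).

Section Tensors.
Variable R : realType.
Local Notation Q := (quat R).

(* third-order quaternion tensors: n3 frontal slices A^(s) = A s (0-based) *)
Definition qtensor n1 n2 n3 := {ffun 'I_n3 -> 'M[Q]_(n1, n2)}.

Definition kron m n p q (A : 'M[Q]_(m, n)) (B : 'M[Q]_(p, q)) : 'M[Q]_(p * m, q * n) :=
  \matrix_(i, j) (A (blk i) (blk j) * B (inblk i) (inblk j)).

(* P_{n3}: first row e_1^T, row r >= 2 is e_{n3+2-r}^T (0-based: row r -> column (n3-r) mod n3) *)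
Definition Pmx n : 'M[Q]_n := \matrix_(r, c) (if c == ordneg r then 1 else 0).

Definition bcirc n1 n2 n3 (C : qtensor n1 n2 n3) : 'M[Q]_(n1 * n3, n2 * n3) :=
  \matrix_(i, j) C (ordsub (blk i) (blk j)) (inblk i) (inblk j).

Definition tdpart n1 n2 n3 (A : qtensor n1 n2 n3) : qtensor n1 n2 n3 :=
  [ffun s => map_mx (@qdpart R) (A s)].
Definition tcpart n1 n2 n3 (A : qtensor n1 n2 n3) : qtensor n1 n2 n3 :=
  [ffun s => map_mx (@qcpart R) (A s)].

Definition lmulj m n (M : 'M[Q]_(m, n)) : 'M[Q]_(m, n) := \matrix_(i, j) (qj R * M i j).
Definition rmulj m n (M : 'M[Q]_(m, n)) : 'M[Q]_(m, n) := \matrix_(i, j) (M i j * qj R).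

Definition bcirc_z n1 n2 n3 (A : qtensor n1 n2 n3) : 'M[Q]_(n1 * n3, n2 * n3) :=
  bcirc (tdpart A) + lmulj (bcirc (tcpart A)) *m kron (Pmx n3) (1%:M : 'M[Q]_n2).

Definition tunfold n1 n2 n3 (B : qtensor n1 n2 n3) : 'M[Q]_(n1 * n3, n2) :=
  \matrix_(i, j) B (blk i) (inblk i) j.
Definition tfold n1 n2 n3 (M : 'M[Q]_(n1 * n3, n2)) : qtensor n1 n2 n3 :=
  [ffun s => \matrix_(i, j) M (bidx s i) j].

Definition qtprod n1 r n2 n3 (A : qtensor n1 r n3) (B : qtensor r n2 n3) : qtensor n1 n2 n3 :=
  tfold (bcirc_z A *m tunfold B).

Definition mxconjT m n (M : 'M[Q]_(m, n)) : 'M[Q]_(n, m) := \matrix_(i, j) qconj (M j i).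

(* C^* for a complex tensor: slice 1 is conjT(C^(1)), slice s >= 2 is
   conjT(C^(n3+2-s)); 0-based: slice s is conjT(C^((n3 - s) mod n3)) *)
Definition ctconjT n1 n2 n3 (C : qtensor n1 n2 n3) : qtensor n2 n1 n3 :=
  [ffun s => mxconjT (C (ordneg s))].

Definition qtconjT n1 n2 n3 (A : qtensor n1 n2 n3) : qtensor n2 n1 n3 :=
  tfold (tunfold (ctconjT (tdpart A))
        - rmulj (kron (Pmx n3) (1%:M : 'M[Q]_n2) *m tunfold (ctconjT (tcpart A)))).

Definition vnorm n (x : 'cV[Q]_n) : R := Num.sqrt (\sum_i qabs (x i 0) ^+ 2).
Definition mx2norm m n (M : 'M[Q]_(m, n)) : R :=
  sup [set vnorm (M *m x) | x in [set x : 'cV[Q]_n | vnorm x = 1]].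

Definition right_eigenvalue n (M : 'M[Q]_n) (l : Q) : Prop :=
  exists x : 'cV[Q]_n, x != 0 /\ M *m x = \matrix_(i, j) (x i j * l).
Definition spec_radius n (M : 'M[Q]_n) : R :=
  sup [set qabs l | l in [set l | right_eigenvalue M l]].

Definition qt_snorm n1 n2 n3 (A : qtensor n1 n2 n3) : R := mx2norm (bcirc_z A).
Definition qt_srad n1 n3 (A : qtensor n1 n1 n3) : R := spec_radius (bcirc_z A).

Definition qtcast n1 m m' n3 (e : m = m') (A : qtensor n1 m n3) : qtensor n1 m' n3 :=
  [ffun s => castmx (erefl n1, e) (A s)].

End Tensors.

From HB Require Import structures.
From mathcomp Require Import all_boot all_order all_algebra.
From mathcomp Require Import ring lra zify.
From mathcomp Require Import boolp classical_sets reals.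
Set Implicit Arguments. Unset Strict Implicit. Unset Printing Implicit Defensive.
Import Order.TTheory GRing.Theory Num.Theory.
Local Open Scope ring_scope.

(* The z-block circulant map A |-> bcirc_z A is injective (A is read off its
   first block column), additive, and turns the QT-product into the matrix
   product and the conjugate transpose of tensors into that of matrices.
   Parts (3)-(5) are therefore matrix identities, and (1)-(2) are the facts
   rho(M) <= ||M||_2 and ||M P||_2 <= ||M||_2 ||P||_2 for quaternion matrices.
   Multiplicativity is a computation: block (p, q) of bcirc_z A is
   A_d^(p-q) + j A_c^(p+q) (indices mod n3), and since z j = j conj(z) for
   complex z, a product of two such blocks summed over the middle block index
   is again of this shape. *)

Section QuaternionParts.
Variable R : realType.
Local Notation Q := (quat R).
Local Notation qd := (@qdpart R).
Local Notation qc := (@qcpart R).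
Local Notation qJ := (qj R).
Implicit Types x y : Q.

Lemma qmulE x y : x * y = qmul x y. Proof. by []. Qed.
Lemma qaddE x y : x + y = qadd x y. Proof. by []. Qed.
Lemma qoppE x : - x = qopp x. Proof. by []. Qed.

Ltac quat_ring := rewrite ?qmulE ?qaddE ?qoppE;
  repeat match goal with x : quat _ |- _ => destruct x end;
  rewrite /qmul /qadd /qopp /qdpart /qcpart /qconj /qj /=; congr Quat; ring.

Lemma qdpart_is_zmod_morphism : zmod_morphism qd. Proof. by move=> x y; quat_ring. Qed.
HB.instance Definition _ := GRing.isZmodMorphism.Build Q Q qd qdpart_is_zmod_morphism.
Lemma qcpart_is_zmod_morphism : zmod_morphism qc. Proof. by move=> x y; quat_ring. Qed.
HB.instance Definition _ := GRing.isZmodMorphism.Build Q Q qc qcpart_is_zmod_morphism.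
Lemma qconj_is_zmod_morphism : zmod_morphism (@qconj R). Proof. by move=> x y; quat_ring. Qed.
HB.instance Definition _ := GRing.isZmodMorphism.Build Q Q (@qconj R) qconj_is_zmod_morphism.

Lemma qconjM x y : qconj (x * y) = qconj y * qconj x. Proof. quat_ring. Qed.
Lemma qdpart_conj x : qd (qconj x) = qconj (qd x). Proof. quat_ring. Qed.

Lemma quat_split x : x = qd x + qJ * qc x. Proof. quat_ring. Qed.
Lemma qdpart_dj x y : qd (qd x + qJ * qc y) = qd x. Proof. quat_ring. Qed.
Lemma qcpart_dj x y : qc (qd x + qJ * qc y) = qc y. Proof. quat_ring. Qed.
Lemma qconj_dj x y : qconj (qd x + qJ * qc y) = qconj (qd x) - qJ * qc y.
Proof. quat_ring. Qed.
Lemma mulr_dj x1 y1 x2 y2 :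
  (qd x1 + qJ * qc y1) * (qd x2 + qJ * qc y2) =
  (qd x1 * qd x2 - qconj (qc y1) * qc y2) + qJ * (qconj (qd x1) * qc y2 + qc y1 * qd x2).
Proof. quat_ring. Qed.

Lemma qconj_qcpart_mulj x : qconj (qc x) * qJ = qJ * qc x. Proof. quat_ring. Qed.

Lemma qdpartM x y : qd (x * y) = qd x * qd y - qconj (qc x) * qc y. Proof. quat_ring. Qed.
Lemma qcpartM x y : qc (x * y) = qconj (qd x) * qc y + qc x * qd y. Proof. quat_ring. Qed.

End QuaternionParts.

Lemma mxconjT_mul (R : realType) m1 m2 m3 (M : 'M[quat R]_(m1, m2)) (P : 'M_(m2, m3)) :
  mxconjT (M *m P) = mxconjT P *m mxconjT M.
Proof.
apply/matrixP => i j; rewrite !mxE raddf_sum /=; apply: eq_bigr => k _.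
by rewrite !mxE qconjM.
Qed.

Section BlockIndex.
Variables n p : nat.

Lemma blk_bidx (s : 'I_p) (i : 'I_n) : blk (bidx s i) = s.
Proof.
apply: val_inj => /=; have n_gt0 : (0 < n)%N by case: i => i /=; lia.
by rewrite divnMDl // divn_small ?addn0.
Qed.

Lemma inblk_bidx (s : 'I_p) (i : 'I_n) : inblk (bidx s i) = i.
Proof. by apply: val_inj => /=; rewrite modnMDl modn_small. Qed.

Lemma bidx_blk (i : 'I_(n * p)) : bidx (blk i) (inblk i) = i.
Proof. by apply: val_inj => /=; rewrite -divn_eq. Qed.

Lemma eq_bidx (i : 'I_(n * p)) s k : (i == bidx s k) = (blk i == s) && (inblk i == k).
Proof.
apply/eqP/andP => [->|[/eqP <- /eqP <-]]; last by rewrite bidx_blk.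
by rewrite blk_bidx inblk_bidx.
Qed.

Lemma big_bidx (V : nmodType) (F : 'I_(n * p) -> V) :
  \sum_i F i = \sum_(s < p) \sum_(k < n) F (bidx s k).
Proof.
rewrite pair_big /= (reindex (fun sk : 'I_p * 'I_n => bidx sk.1 sk.2)) //=.
exists (fun i => (blk i, inblk i)) => [[s k] _|i _] /=.
  by rewrite blk_bidx inblk_bidx.
by rewrite bidx_blk.
Qed.

End BlockIndex.

Lemma ordsubE n (p q : 'I_n.+1) : ordsub p q = p - q.
Proof. by apply: val_inj => /=; rewrite modnDmr addnBA // ltnW. Qed.

Lemma ordnegE n (r : 'I_n.+1) : ordneg r = - r.
Proof. by apply: val_inj. Qed.

Section ZBlockCirculant.
Variables (R : realType) (n : nat).
Local Notation Q := (quat R).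
Local Notation N := n.+1.
Local Notation qd := (@qdpart R).
Local Notation qc := (@qcpart R).
Local Notation qJ := (qj R).

Definition bflip k (i : 'I_(k * N)) : 'I_(k * N) := bidx (- blk i) (inblk i).

Lemma kronP1E k (i j : 'I_(k * N)) :
  kron (Pmx R N) (1%:M : 'M[Q]_k) i j = (i == bflip j)%:R.
Proof.
rewrite !mxE eq_bidx ordnegE eq_sym eqr_oppLR.
by case: (blk i == _); case: (inblk i == _); rewrite ?mul1r ?mul0r.
Qed.

Lemma bflipK k : involutive (@bflip k).
Proof. by move=> i; rewrite /bflip blk_bidx inblk_bidx opprK bidx_blk. Qed.

Lemma mulmx_kronP1 m k (M : 'M[Q]_(m, k * N)) i j :
  (M *m kron (Pmx R N) 1%:M) i j = M i (bflip j).
Proof.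
rewrite mxE (bigD1 (bflip j)) //= kronP1E eqxx mulr1 big1 ?addr0 // => l /negbTE.
by rewrite kronP1E => ->; rewrite mulr0.
Qed.

Lemma kronP1_mulmx k m (M : 'M[Q]_(k * N, m)) i j :
  (kron (Pmx R N) 1%:M *m M) i j = M (bflip i) j.
Proof.
rewrite mxE (bigD1 (bflip i)) //= kronP1E bflipK eqxx mul1r big1 ?addr0 // => l hl.
by rewrite kronP1E eq_sym (can2_eq (@bflipK k) (@bflipK k)) (negbTE hl) mul0r.
Qed.

(* The twist by P (x) I turns the circulant index p - q of the j-part into p + q. *)
Lemma bcirc_zE n1 n2 (X : qtensor R n1 n2 N) i j :
  bcirc_z X i j = qd (X (blk i - blk j) (inblk i) (inblk j))
                + qJ * qc (X (blk i + blk j) (inblk i) (inblk j)).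
Proof.
rewrite /bcirc_z mxE mulmx_kronP1 !mxE /tdpart /tcpart !ffunE !mxE !ordsubE.
by rewrite blk_bidx inblk_bidx opprK.
Qed.

Lemma bcirc_z_col0 n1 n2 (X : qtensor R n1 n2 N) s a b :
  bcirc_z X (bidx s a) (bidx 0 b) = X s a b.
Proof. by rewrite bcirc_zE !blk_bidx !inblk_bidx subr0 addr0 -quat_split. Qed.

Lemma qtconjTE n1 n2 (X : qtensor R n1 n2 N) s a b :
  qtconjT X s a b = qd (qconj (X (- s) b a)) + qJ * qc (- X s b a).
Proof.
rewrite /qtconjT /tfold ffunE mxE [LHS]mxE [X in _ + X]mxE [X in _ - X]mxE kronP1_mulmx.
rewrite !mxE !blk_bidx !inblk_bidx /ctconjT /tdpart /tcpart !ffunE !mxE !ordnegE opprK.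
by rewrite qconj_qcpart_mulj -qdpart_conj raddfN mulrN.
Qed.

Lemma qtprodE n1 m n2 (A : qtensor R n1 m N) (B : qtensor R m n2 N) s a b :
  qtprod A B s a b =
  \sum_r \sum_(k < m) (qd (A (s - r) a k) + qJ * qc (A (s + r) a k)) * B r k b.
Proof.
rewrite /qtprod /tfold ffunE !mxE big_bidx; apply: eq_bigr => r _.
by apply: eq_bigr => k _; rewrite bcirc_zE /tunfold !mxE !blk_bidx !inblk_bidx.
Qed.

Lemma qdpart_qtprod n1 m n2 (A : qtensor R n1 m N) (B : qtensor R m n2 N) s a b :
  qd (qtprod A B s a b) =
  \sum_r \sum_(k < m) qd (A (s - r) a k) * qd (B r k b)
  - \sum_r \sum_(k < m) qconj (qc (A (s + r) a k)) * qc (B r k b).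
Proof.
rewrite qtprodE raddf_sum /= -sumrB; apply: eq_bigr => r _.
rewrite raddf_sum /= -sumrB; apply: eq_bigr => k _.
by rewrite qdpartM qdpart_dj qcpart_dj.
Qed.

Lemma qcpart_qtprod n1 m n2 (A : qtensor R n1 m N) (B : qtensor R m n2 N) s a b :
  qc (qtprod A B s a b) =
  \sum_r \sum_(k < m) qconj (qd (A (s - r) a k)) * qc (B r k b)
  + \sum_r \sum_(k < m) qc (A (s + r) a k) * qd (B r k b).
Proof.
rewrite qtprodE raddf_sum /= -big_split; apply: eq_bigr => r _.
rewrite raddf_sum /= -big_split; apply: eq_bigr => k _.
by rewrite qcpartM qdpart_dj qcpart_dj.
Qed.

Lemma mulmx_bcirc_zE n1 m n2 (A : qtensor R n1 m N) (B : qtensor R m n2 N) i j :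
  (bcirc_z A *m bcirc_z B) i j =
    (\sum_r \sum_(k < m) qd (A (blk i - r) (inblk i) k) * qd (B (r - blk j) k (inblk j))
     - \sum_r \sum_(k < m)
         qconj (qc (A (blk i + r) (inblk i) k)) * qc (B (r + blk j) k (inblk j)))
  + qJ * (\sum_r \sum_(k < m)
            qconj (qd (A (blk i - r) (inblk i) k)) * qc (B (r + blk j) k (inblk j))
          + \sum_r \sum_(k < m) qc (A (blk i + r) (inblk i) k) * qd (B (r - blk j) k (inblk j))).
Proof.
rewrite mxE big_bidx -big_split -sumrB mulr_sumr -big_split; apply: eq_bigr => r _.
rewrite -big_split -sumrB mulr_sumr -big_split; apply: eq_bigr => k _.
by rewrite !bcirc_zE !blk_bidx !inblk_bidx mulr_dj.
Qed.

End ZBlockCirculant.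

Section ZBlockCirculantMorphism.
Variable R : realType.
Local Notation Q := (quat R).

Lemma qtensor_nil_eq n1 n2 (X Y : qtensor R n1 n2 0) : X = Y.
Proof. by apply/ffunP => -[]. Qed.

Lemma matrix_nil_rows k m (M M' : 'M[Q]_(k * 0, m)) : M = M'.
Proof. by apply/matrixP => -[i lt_ik0]; exfalso; rewrite muln0 in lt_ik0. Qed.

Lemma bcirc_z_inj n1 n2 n3 : injective (@bcirc_z R n1 n2 n3).
Proof.
case: n3 => [|n] X Y eXY; first exact: qtensor_nil_eq.
by apply/ffunP => s; apply/matrixP => a b; rewrite -!bcirc_z_col0 eXY.
Qed.

Lemma bcirc_zD n1 n2 n3 (X Y : qtensor R n1 n2 n3) :
  bcirc_z (X + Y) = bcirc_z X + bcirc_z Y.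
Proof.
case: n3 X Y => [|n] X Y; first exact: matrix_nil_rows.
by apply/matrixP => i j; rewrite [RHS]mxE !bcirc_zE !ffunE !mxE !raddfD /= mulrDr addrACA.
Qed.

Lemma bcirc_zM n1 m n2 n3 (A : qtensor R n1 m n3) (B : qtensor R m n2 n3) :
  bcirc_z (qtprod A B) = bcirc_z A *m bcirc_z B.
Proof.
case: n3 A B => [|n] A B; first exact: matrix_nil_rows.
apply/matrixP => i j; rewrite bcirc_zE qdpart_qtprod qcpart_qtprod mulmx_bcirc_zE.
congr (_ - _ + qj R * (_ + _)).
- rewrite [RHS](reindex_inj (addIr (blk j))); apply: eq_bigr => r _.
  by rewrite addrK opprD addrA addrAC.
- rewrite [RHS](reindex_inj (addIr (- blk j))); apply: eq_bigr => r _.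
  by rewrite subrK addrA addrAC.
- rewrite [RHS](reindex_inj (addIr (- blk j))); apply: eq_bigr => r _.
  by rewrite subrK opprB addrA.
- rewrite [RHS](reindex_inj (addIr (blk j))); apply: eq_bigr => r _.
  by rewrite addrK addrA addrAC.
Qed.

Lemma bcirc_z_conjT n1 n2 n3 (X : qtensor R n1 n2 n3) :
  bcirc_z (qtconjT X) = mxconjT (bcirc_z X).
Proof.
case: n3 X => [|n] X; first exact: matrix_nil_rows.
apply/matrixP => i j; rewrite [RHS]mxE !bcirc_zE !qtconjTE qdpart_dj qcpart_dj qconj_dj.
by rewrite qdpart_conj raddfN /= mulrN opprB (addrC (blk i)).
Qed.

End ZBlockCirculantMorphism.

Section SpectralNorm.
Variable R : realType.
Local Notation Q := (quat R).

Lemma sup_ge0 (E : set R) : (forall x, E x -> 0 <= x) -> 0 <= sup E.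
Proof.
move=> E_ge0; have [[[y Ey] E_ub]|no_sup] := pselect (has_sup E); last by rewrite sup_out.
exact: le_trans (E_ge0 _ Ey) (ub_le_sup E_ub Ey).
Qed.

Lemma sup_le_ub (E : set R) x : 0 <= x -> ubound E x -> sup E <= x.
Proof.
move=> x_ge0 x_ub; have [[y Ey]|E0] := pselect (exists y, E y).
  exact: ge_sup (ex_intro _ y Ey) x_ub.
by rewrite sup_out // => -[[y Ey] _]; apply: E0; exists y.
Qed.

Definition qnorm2 (a : Q) : R := q0 a ^+ 2 + q1 a ^+ 2 + q2 a ^+ 2 + q3 a ^+ 2.

Lemma qnorm2_ge0 a : 0 <= qnorm2 a.
Proof. by rewrite /qnorm2 !addr_ge0 // sqr_ge0. Qed.

Lemma qnorm20 : qnorm2 0 = 0.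
Proof. by rewrite /qnorm2 /= expr0n !addr0. Qed.

Lemma qnorm2_eq0 a : (qnorm2 a == 0) = (a == 0).
Proof.
apply/eqP/eqP => [|->]; last exact: qnorm20.
case: a => a0 a1 a2 a3; rewrite /qnorm2 /= => h.
by congr Quat; apply/eqP; rewrite -sqrf_eq0 eq_le sqr_ge0 andbT; nra.
Qed.

Lemma qabsE a : qabs a = Num.sqrt (qnorm2 a).
Proof. by congr Num.sqrt; case: a => a0 a1 a2 a3; rewrite /qnorm2 /=; ring. Qed.

Lemma qnorm2M a b : qnorm2 (a * b) = qnorm2 a * qnorm2 b.
Proof. by case: a b => [a0 a1 a2 a3] [b0 b1 b2 b3]; rewrite /qnorm2 /=; ring. Qed.

Lemma qnorm2D_le a b : qnorm2 (a + b) <= 2 * (qnorm2 a + qnorm2 b).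
Proof.
case: a b => [a0 a1 a2 a3] [b0 b1 b2 b3]; rewrite /qnorm2 /=.
have := sqr_ge0 (a0 - b0); have := sqr_ge0 (a1 - b1).
have := sqr_ge0 (a2 - b2); have := sqr_ge0 (a3 - b3).
nra.
Qed.

(* A crude bound: it only serves to show that the set defining mx2norm is bounded. *)
Lemma qnorm2_sum_le p (F : 'I_p -> Q) :
  qnorm2 (\sum_i F i) <= 2 ^+ p * \sum_i qnorm2 (F i).
Proof.
elim: p F => [|p IHp] F; first by rewrite !big_ord0 qnorm20 mulr0.
rewrite !big_ord_recl exprS; apply: le_trans (qnorm2D_le _ _) _.
have := IHp (fun i => F (lift ord0 i)).
have : 0 <= \sum_(i < p) qnorm2 (F (lift ord0 i)) by apply: sumr_ge0 => i _; exact: qnorm2_ge0.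
have := qnorm2_ge0 (F ord0).
have : 1 <= 2 ^+ p :> R by rewrite exprn_ege1 // ler1n.
nra.
Qed.

Definition vnorm2 n (x : 'cV[Q]_n) : R := \sum_i qnorm2 (x i 0).

Lemma vnorm2_ge0 n (x : 'cV[Q]_n) : 0 <= vnorm2 x.
Proof. by apply: sumr_ge0 => i _; exact: qnorm2_ge0. Qed.

Lemma vnormE n (x : 'cV[Q]_n) : vnorm x = Num.sqrt (vnorm2 x).
Proof.
congr Num.sqrt; apply: eq_bigr => i _.
by rewrite qabsE sqr_sqrtr ?qnorm2_ge0.
Qed.

Lemma vnorm2_gt0 n (x : 'cV[Q]_n) : x != 0 -> 0 < vnorm2 x.
Proof.
move=> x_neq0; rewrite lt_def vnorm2_ge0 andbT; apply: contra x_neq0.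
move=> /eqP /psumr_eq0P x0; apply/eqP/matrixP => i j.
by rewrite ord1 mxE; apply/eqP; rewrite -qnorm2_eq0 x0 // => k _; exact: qnorm2_ge0.
Qed.

Lemma vnorm2_mulmx_le p q (M : 'M[Q]_(p, q)) (x : 'cV[Q]_q) :
  vnorm2 (M *m x) <= 2 ^+ q * (\sum_i \sum_k qnorm2 (M i k)) * vnorm2 x.
Proof.
rewrite -mulrA mulr_suml mulr_sumr; apply: ler_sum => i _.
rewrite mxE; apply: le_trans (qnorm2_sum_le _) _.
rewrite ler_wpM2l ?exprn_ge0 // mulr_suml; apply: ler_sum => k _.
rewrite qnorm2M ler_wpM2l ?qnorm2_ge0 // /vnorm2 (bigD1 k) //= lerDl.
by apply: sumr_ge0 => l _; exact: qnorm2_ge0.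
Qed.

Definition rscale n (x : 'cV[Q]_n) (c : Q) : 'cV[Q]_n := \matrix_(i, j) (x i j * c).

Lemma mulmx_rscale p q (M : 'M[Q]_(p, q)) (x : 'cV[Q]_q) c :
  M *m rscale x c = rscale (M *m x) c.
Proof.
apply/matrixP => i j; rewrite !mxE mulr_suml; apply: eq_bigr => k _.
by rewrite mxE mulrA.
Qed.

Lemma vnorm_rscale n (x : 'cV[Q]_n) c : vnorm (rscale x c) = vnorm x * qabs c.
Proof.
rewrite !vnormE qabsE -sqrtrM ?vnorm2_ge0 //; congr Num.sqrt.
by rewrite mulr_suml; apply: eq_bigr => i _; rewrite mxE qnorm2M.
Qed.

Lemma mx2norm_ubound p q (M : 'M[Q]_(p, q)) :
  has_ubound [set vnorm (M *m x) | x in [set x | vnorm x = 1]].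
Proof.
exists (Num.sqrt (2 ^+ q * \sum_i \sum_k qnorm2 (M i k))) => _ [x /= x1 <-].
have x1' : vnorm2 x = 1 by rewrite -[LHS]sqr_sqrtr ?vnorm2_ge0 // -vnormE x1 expr1n.
by rewrite vnormE ler_wsqrtr // (le_trans (vnorm2_mulmx_le M x)) // x1' mulr1.
Qed.

Lemma mx2norm_ge0 p q (M : 'M[Q]_(p, q)) : 0 <= mx2norm M.
Proof. by apply: sup_ge0 => _ [x _ <-]; rewrite vnormE sqrtr_ge0. Qed.

Lemma mx2norm_le p q (M : 'M[Q]_(p, q)) (x : 'cV[Q]_q) :
  vnorm (M *m x) <= mx2norm M * vnorm x.
Proof.
have [->|x_neq0] := eqVneq x 0.
  by rewrite mulmx0 !vnormE /vnorm2 !big1 ?sqrtr0 ?mulr0 // => i _; rewrite mxE qnorm20.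
have x_gt0 : 0 < vnorm x by rewrite vnormE sqrtr_gt0 vnorm2_gt0.
pose c : Q := Quat (vnorm x)^-1 0 0 0.
have c_abs : qabs c = (vnorm x)^-1.
  by rewrite qabsE /qnorm2 /= expr0n /= !addr0 sqrtr_sqr ger0_norm // invr_ge0 ltW.
have x_c : vnorm (rscale x c) = 1 by rewrite vnorm_rscale c_abs divff // gt_eqF.
have := ub_le_sup (mx2norm_ubound M) (ex_intro2 _ _ _ x_c erefl).
by rewrite mulmx_rscale vnorm_rscale c_abs ler_pdivrMr.
Qed.

Lemma mx2normM p q r (M : 'M[Q]_(p, q)) (P : 'M[Q]_(q, r)) :
  mx2norm (M *m P) <= mx2norm M * mx2norm P.
Proof.
apply: sup_le_ub; first by rewrite mulr_ge0 ?mx2norm_ge0.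
move=> _ [x /= x1 <-]; rewrite -mulmxA; apply: le_trans (mx2norm_le _ _) _.
by rewrite ler_wpM2l ?mx2norm_ge0 // -[X in _ <= X]mulr1 -x1 mx2norm_le.
Qed.

Lemma spec_radius_le_mx2norm p (M : 'M[Q]_p) : spec_radius M <= mx2norm M.
Proof.
apply: sup_le_ub; first exact: mx2norm_ge0.
move=> _ [l [x [x_neq0 Mx]] <-]; have := mx2norm_le M x.
rewrite Mx -/(rscale x l) vnorm_rscale mulrC ler_pM2r //.
by rewrite vnormE sqrtr_gt0 vnorm2_gt0.
Qed.

End SpectralNorm.

Lemma qtcast_id (R : realType) n1 n n3 (e : n = n) (A : qtensor R n1 n n3) :
  qtcast e A = A.
Proof. by apply/ffunP => s; rewrite ffunE (eq_axiomK e) castmx_id. Qed.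

Theorem lemma2p15 (R : realType) (n1 m n2 n3 : nat)
    (A : qtensor R n1 m n3) (B : qtensor R m n2 n3) :
  [/\ (forall e : m = n1, qt_srad (qtcast e A) <= qt_snorm A),
      qt_snorm (qtprod A B) <= qt_snorm A * qt_snorm B,
      qtconjT (qtprod A B) = qtprod (qtconjT B) (qtconjT A),
      (forall (n : nat) (C : qtensor R n2 n n3),
          qtprod (qtprod A B) C = qtprod A (qtprod B C))
    & (forall C : qtensor R m n2 n3, qtprod A (B + C) = qtprod A B + qtprod A C)].
Proof.
split.
- by move=> e; subst n1; rewrite qtcast_id; exact: spec_radius_le_mx2norm.
- by rewrite /qt_snorm bcirc_zM; exact: mx2normM.
- by apply: bcirc_z_inj; rewrite bcirc_z_conjT !bcirc_zM !bcirc_z_conjT mxconjT_mul.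
- by move=> n C; apply: bcirc_z_inj; rewrite !bcirc_zM mulmxA.
- by move=> C; apply: bcirc_z_inj; rewrite bcirc_zM !bcirc_zD !bcirc_zM mulmxDr.
Qed.
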